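(* In an ample-reserves equilibrium, the bank-level reserves $\tilde r$ and loans $\tilde\ell$, as functions of $(i,i_r)$ determined by the two equations $\frac{1+i}{1+i_r-\gamma'(\tilde r)}-1-\eta'(\tilde\ell)=0$ and $\gamma'(\tilde r)\tilde r-\gamma(\tilde r)+\eta'(\tilde\ell)\tilde\ell-\eta(\tilde\ell)-k=0$ (with $1+i_r-\gamma'(\tilde r)>0$), satisfy $$\frac{\partial\tilde\ell}{\partial i}>0,\qquad \frac{\partial\tilde r}{\partial i}<0,\qquad \frac{\partial\tilde\ell}{\partial i_r}<0,\qquad \frac{\partial\tilde r}{\partial i_r}>0.$$
   Context: Bank cost functions $\gamma,\eta:[0,\infty)\to[0,\infty)$ are twice differentiable with $\gamma',\gamma''>0$ and $\eta',\eta''>0$ on $(0,\infty)$, $\gamma(0)=\gamma'(0)=\eta(0)=\eta'(0)=0$; $k>0$ is an entry cost; $i\ge0$ is the nominal interest rate and $i_r$ the interest on reserves. In an ample-reserves equilibrium the bank's lending constraint does not bind and $\tilde r,\tilde\ell>0$ solve the two stated equations. *)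

From Stdlib Require Import Reals Lra.
From Coquelicot Require Import Coquelicot.
Open Scope R_scope.

(* Bank cost function on [0,oo): twice differentiable on (0,oo) with
   c' > 0 and c'' > 0 there, c(0) = 0 and right derivative c'(0) = 0.
   c' is represented by Coquelicot's total operator [Derive c]. *)
Definition bank_cost (c : R -> R) : Prop :=
  (forall x, 0 < x -> ex_derive c x) /\
  (forall x, 0 < x -> ex_derive (Derive c) x) /\
  (forall x, 0 < x -> 0 < Derive c x) /\
  (forall x, 0 < x -> 0 < Derive (Derive c) x) /\
  c 0 = 0 /\
  filterlim (fun h => (c h - c 0) / h) (at_right 0) (locally 0).

Definition eq1 (gamma eta : R -> R) (i ir r l : R) : R :=
  (1 + i) / (1 + ir - Derive gamma r) - 1 - Derive eta l.

Definition eq2 (gamma eta : R -> R) (k r l : R) : R :=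
  Derive gamma r * r - gamma r + Derive eta l * l - eta l - k.

Definition ample_eq (gamma eta : R -> R) (k i ir r l : R) : Prop :=
  0 < r /\ 0 < l /\ 0 < 1 + ir - Derive gamma r /\
  eq1 gamma eta i ir r l = 0 /\ eq2 gamma eta k r l = 0.

From Stdlib Require Import Reals Lra.
From Coquelicot Require Import Coquelicot.
Open Scope R_scope.

(* Differentiate both equilibrium conditions along a path t |-> (i t, ir t).
   After clearing its denominator D = 1 + ir - gamma' r > 0, the first gives
   (ir' - gamma'' r * r') (1 + eta' l) + D eta'' l * l' = i'; by the envelope
   identity (c' x * x - c x)' = c'' x * x' * x, the second gives
   gamma'' r * r' * r + eta'' l * l' * l = 0.  Eliminating r',
     eta'' l * ((1 + eta' l) l + D r) * l' = r (i' - ir' (1 + eta' l)),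
   so by convexity l' has the sign of i' - ir' (1 + eta' l), and r' the opposite. *)

(* [auto_derive] leaves eta-expanded functions such as [fun x => r x], which
   [ring] would treat as atoms distinct from [r]. *)
Ltac eta_reduce :=
  repeat match goal with |- context [fun x => ?f x] => change (fun x => f x) with f end.

Lemma is_derive_locally_zero (f : R -> R) (x v : R) :
  locally x (fun t => f t = 0) -> is_derive f x v -> v = 0.
Proof.
  intros Hf Hv.
  apply (is_derive_ext_loc f (fun _ => 0)) in Hv; [| exact Hf].
  rewrite <- (is_derive_unique _ _ _ Hv); apply Derive_const.
Qed.

Section EquilibriumPath.

Variables (gamma eta : R -> R) (k : R) (I IR r l : R -> R) (t0 dI dIR dr dl : R).
Hypotheses (HI : is_derive I t0 dI) (HIR : is_derive IR t0 dIR)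
  (Hr : is_derive r t0 dr) (Hl : is_derive l t0 dl).
Hypotheses (Hgamma : ex_derive gamma (r t0)) (Heta : ex_derive eta (l t0))
  (Hgamma' : ex_derive (Derive gamma) (r t0)) (Heta' : ex_derive (Derive eta) (l t0)).
Hypothesis Hpath : locally t0 (fun t => ample_eq gamma eta k (I t) (IR t) (r t) (l t)).

Lemma eq1_linearized :
  (dIR - dr * Derive (Derive gamma) (r t0)) * (1 + Derive eta (l t0))
  + (1 + IR t0 - Derive gamma (r t0)) * (dl * Derive (Derive eta) (l t0)) = dI.
Proof.
  set (F := fun t => (1 + IR t - Derive gamma (r t)) * (1 + Derive eta (l t)) - (1 + I t)).
  assert (F0 : locally t0 (fun t => F t = 0)).
  { revert Hpath; apply filter_imp; intros t (_ & _ & D & E1 & _).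
    unfold eq1 in E1; unfold F.
    replace (1 + Derive eta (l t)) with ((1 + I t) / (1 + IR t - Derive gamma (r t))) by lra.
    field; lra. }
  assert (dF : is_derive F t0
    ((dIR - dr * Derive (Derive gamma) (r t0)) * (1 + Derive eta (l t0))
     + (1 + IR t0 - Derive gamma (r t0)) * (dl * Derive (Derive eta) (l t0)) - dI)).
  { unfold F; auto_derive; eta_reduce.
    - repeat split; try assumption; eexists; eassumption.
    - rewrite (is_derive_unique _ _ _ HI), (is_derive_unique _ _ _ HIR),
        (is_derive_unique _ _ _ Hr), (is_derive_unique _ _ _ Hl); ring. }
  apply is_derive_locally_zero in dF; [lra | exact F0].
Qed.

Lemma eq2_linearized :
  dr * Derive (Derive gamma) (r t0) * r t0 + dl * Derive (Derive eta) (l t0) * l t0 = 0.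
Proof.
  set (F := fun t => eq2 gamma eta k (r t) (l t)).
  assert (F0 : locally t0 (fun t => F t = 0)).
  { revert Hpath; apply filter_imp; intros t (_ & _ & _ & _ & E2); exact E2. }
  assert (dF : is_derive F t0
    (dr * Derive (Derive gamma) (r t0) * r t0 + dl * Derive (Derive eta) (l t0) * l t0)).
  { unfold F, eq2; auto_derive; eta_reduce.
    - repeat split; try assumption; eexists; eassumption.
    - rewrite (is_derive_unique _ _ _ Hr), (is_derive_unique _ _ _ Hl); ring. }
  exact (is_derive_locally_zero _ _ _ F0 dF).
Qed.

End EquilibriumPath.

Lemma linear_response_signs (G H r l D h dI dIR dr dl : R) :
  0 < G -> 0 < H -> 0 < r -> 0 < l -> 0 < D -> 0 < 1 + h ->
  (dIR - dr * G) * (1 + h) + D * (dl * H) = dI ->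
  dr * G * r + dl * H * l = 0 ->
  (0 < dI - dIR * (1 + h) -> 0 < dl /\ dr < 0) /\
  (dI - dIR * (1 + h) < 0 -> dl < 0 /\ 0 < dr).
Proof.
  intros HG HH Hr Hl HD Hh E1 E2.
  assert (Edl : dl * (H * ((1 + h) * l + D * r)) = r * (dI - dIR * (1 + h))) by nra.
  assert (Edr : dr * (G * r) = - (dl * (H * l))) by lra.
  assert (HP : 0 < H * ((1 + h) * l + D * r)).
  { apply Rmult_lt_0_compat; [exact HH |].
    apply Rplus_lt_0_compat; apply Rmult_lt_0_compat; assumption. }
  assert (HGr : 0 < G * r) by (apply Rmult_lt_0_compat; assumption).
  assert (HHl : 0 < H * l) by (apply Rmult_lt_0_compat; assumption).
  clear E1 E2; split; intro Hx.
  - assert (0 < r * (dI - dIR * (1 + h))) by (apply Rmult_lt_0_compat; assumption).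
    assert (0 < dl) by nra.
    split; nra.
  - assert (r * (dI - dIR * (1 + h)) < 0) by (apply Rmult_pos_neg; assumption).
    assert (dl < 0) by nra.
    split; nra.
Qed.

Lemma equilibrium_path_response_signs (gamma eta : R -> R) (k : R) (I IR r l : R -> R)
    (t0 dI dIR dr dl : R) :
  bank_cost gamma -> bank_cost eta ->
  is_derive I t0 dI -> is_derive IR t0 dIR -> is_derive r t0 dr -> is_derive l t0 dl ->
  locally t0 (fun t => ample_eq gamma eta k (I t) (IR t) (r t) (l t)) ->
  (0 < dI - dIR * (1 + Derive eta (l t0)) -> 0 < dl /\ dr < 0) /\
  (dI - dIR * (1 + Derive eta (l t0)) < 0 -> dl < 0 /\ 0 < dr).
Proof.
  intros (g1 & g2 & _ & g4 & _) (e1 & e2 & e3 & e4 & _) HI HIR Hr Hl Hpath.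
  destruct (locally_singleton _ _ Hpath) as (Hr0 & Hl0 & HD & _).
  apply (linear_response_signs (Derive (Derive gamma) (r t0)) (Derive (Derive eta) (l t0))
           (r t0) (l t0) (1 + IR t0 - Derive gamma (r t0))); auto.
  - specialize (e3 _ Hl0); lra.
  - exact (eq1_linearized gamma eta k I IR r l t0 dI dIR dr dl HI HIR Hr Hl
             (g2 _ Hr0) (e2 _ Hl0) Hpath).
  - exact (eq2_linearized gamma eta k I IR r l t0 dr dl Hr Hl
             (g1 _ Hr0) (e1 _ Hl0) (g2 _ Hr0) (e2 _ Hl0) Hpath).
Qed.

Theorem mainTheorem2
  (gamma eta : R -> R) (k : R) (rt lt : R -> R -> R) (i0 ir0 delta : R) :
  bank_cost gamma -> bank_cost eta -> 0 < k ->
  0 <= i0 -> 0 < delta ->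
  (forall i ir, Rabs (i - i0) < delta -> Rabs (ir - ir0) < delta ->
     ample_eq gamma eta k i ir (rt i ir) (lt i ir)) ->
  ex_derive (fun i => rt i ir0) i0 -> ex_derive (fun i => lt i ir0) i0 ->
  ex_derive (fun ir => rt i0 ir) ir0 -> ex_derive (fun ir => lt i0 ir) ir0 ->
  0 < Derive (fun i => lt i ir0) i0 /\
  Derive (fun i => rt i ir0) i0 < 0 /\
  Derive (fun ir => lt i0 ir) ir0 < 0 /\
  0 < Derive (fun ir => rt i0 ir) ir0.
Proof.
  intros Hgamma Heta _ _ Hdelta Hample Hri Hli Hrir Hlir.
  assert (Hcenter : Rabs (i0 - i0) < delta) by (rewrite Rminus_eq_0, Rabs_R0; exact Hdelta).
  assert (Hcenter' : Rabs (ir0 - ir0) < delta) by (rewrite Rminus_eq_0, Rabs_R0; exact Hdelta).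
  destruct (equilibrium_path_response_signs gamma eta k (fun i => i) (fun _ => ir0)
              (fun i => rt i ir0) (fun i => lt i ir0) i0 1 0 _ _ Hgamma Heta
              (is_derive_id i0) (is_derive_const ir0 i0)
              (Derive_correct _ _ Hri) (Derive_correct _ _ Hli)) as [Hi _].
  { exists (mkposreal _ Hdelta); intros i Hi; exact (Hample _ _ Hi Hcenter'). }
  destruct (equilibrium_path_response_signs gamma eta k (fun _ => i0) (fun ir => ir)
              (fun ir => rt i0 ir) (fun ir => lt i0 ir) ir0 0 1 _ _ Hgamma Heta
              (is_derive_const i0 ir0) (is_derive_id ir0)
              (Derive_correct _ _ Hrir) (Derive_correct _ _ Hlir)) as [_ Hir].
  { exists (mkposreal _ Hdelta); intros ir Hir; exact (Hample _ _ Hcenter Hir). }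
  destruct (Hample i0 ir0 Hcenter Hcenter') as (_ & Hl0 & _).
  pose proof (proj1 (proj2 (proj2 Heta)) _ Hl0) as Heta'_pos.
  destruct (Hi ltac:(lra)), (Hir ltac:(lra)).
  repeat split; assumption.
Qed.
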